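(* Let $\mathcal A$ be the set of admissible price systems and $I(p)=\int_X p^\sharp(x)\,d\mu(x)-\int_Y p^\flat(y)\,d\nu(y)$. Then $I$ is convex, and there exists $\bar p\in\mathcal A$ with $I(\bar p)=\inf_{p\in\mathcal A}I(p)$.
   Context: Standing setting. $X\subset\mathbb R^{d_1}$, $Y\subset\mathbb R^{d_2}$, $Z_0\subset\mathbb R^{d_3}$ compact; $\mu,\nu$ finite nonnegative Borel measures on $X,Y$. $u$ continuous on a neighbourhood of $X\times Z_0$, differentiable in $x$ with $D_xu$ continuous; $v$ continuous on a neighbourhood of $Y\times Z_0$, differentiable in $y$ with $D_yv$ continuous. $Z=Z_0\cup\{\varnothing_d\}\cup\{\varnothing_s\}$ with two distinct isolated extra points; $u(x,\varnothing_d)=0$, $u(x,\varnothing_s)=-1$, $v(y,\varnothing_s)=0$, $v(y,\varnothing_d)=1$. $b(z)=\max_x u(x,z)$, $a(z)=\min_y v(y,z)$, $Z_1=\{z\in Z:a(z)\le b(z)\}$, assumed non-empty. A price system is a continuous $p:Z\to\mathbb R$ with $p(\varnothing_d)=p(\varnothing_s)=0$; admissible if $a\le p\le b$ on $Z_1$. $p^\sharp(x)=\max_{z\in Z}\{u(x,z)-p(z)\}$, $p^\flat(y)=\min_{z\in Z}\{v(y,z)-p(z)\}$. *)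

From HB Require Import structures.
From mathcomp Require Import all_boot all_order all_algebra.
From mathcomp Require Import all_classical all_reals all_analysis.
Set Implicit Arguments.
Unset Strict Implicit.
Unset Printing Implicit Defensive.
Import Order.TTheory GRing.Theory Num.Theory.
Import numFieldNormedType.Exports.
Local Open Scope classical_set_scope.
Local Open Scope ring_scope.

(* R^n with its Borel sigma-algebra (generated by the open sets of the
   normed space 'rV[R]_n); convertible to 'rV[R]_n. *)
Definition borelRV (R : realType) (n : nat) :=
  g_sigma_algebraType (@open 'rV[R]_n).

(* Z = Z0 u {empty_d} u {empty_s}: a point of R^{d3} or one of two extra
   (isolated) points. *)
Inductive Zpt (V : Type) := ZR of V | Zd | Zs.
Arguments Zd {V}.
Arguments Zs {V}.

Section Defs.
Variables (R : realType) (d1 d2 d3 : nat).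
Local Notation V := 'rV[R]_d3.

Definition Zset (Z0 : set V) : set (Zpt V) :=
  [set z | match z with ZR z0 => Z0 z0 | _ => True end].

Definition uext (u : 'rV[R]_d1 -> V -> R) (x : 'rV[R]_d1) (z : Zpt V) : R :=
  match z with ZR z0 => u x z0 | Zd => 0 | Zs => -1 end.
Definition vext (v : 'rV[R]_d2 -> V -> R) (y : 'rV[R]_d2) (z : Zpt V) : R :=
  match z with ZR z0 => v y z0 | Zs => 0 | Zd => 1 end.

Definition bfun (X : set 'rV[R]_d1) (u : 'rV[R]_d1 -> V -> R) (z : Zpt V) : R :=
  sup [set uext u x z | x in X].
Definition afun (Y : set 'rV[R]_d2) (v : 'rV[R]_d2 -> V -> R) (z : Zpt V) : R :=
  inf [set vext v y z | y in Y].

Definition Z1set X Y Z0 u v : set (Zpt V) :=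
  [set z | Zset Z0 z /\ afun Y v z <= bfun X u z].

(* price system: continuous on Z (the two extra points being isolated, this
   is continuity of the restriction to Z0), vanishing at the extra points *)
Definition price_system (Z0 : set V) (p : Zpt V -> R) : Prop :=
  {within Z0, continuous (fun z0 => p (ZR z0))} /\ p Zd = 0 /\ p Zs = 0.

Definition admissible X Y Z0 u v (p : Zpt V -> R) : Prop :=
  price_system Z0 p /\
  forall z, Z1set X Y Z0 u v z -> afun Y v z <= p z <= bfun X u z.

Definition psharp Z0 u (p : Zpt V -> R) (x : 'rV[R]_d1) : R :=
  sup [set uext u x z - p z | z in Zset Z0].
Definition pflat Z0 v (p : Zpt V -> R) (y : 'rV[R]_d2) : R :=
  inf [set vext v y z - p z | z in Zset Z0].

Definition Ifun (mu : {finite_measure set (borelRV R d1) -> \bar R})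
  (nu : {finite_measure set (borelRV R d2) -> \bar R})
  (X : set 'rV[R]_d1) (Y : set 'rV[R]_d2) Z0 u v (p : Zpt V -> R) : R :=
  Rintegral mu (X : set (borelRV R d1)) (psharp Z0 u p : borelRV R d1 -> R)
  - Rintegral nu (Y : set (borelRV R d2)) (pflat Z0 v p : borelRV R d2 -> R).

End Defs.

(* f : R^{n} -> R^{m} -> R is continuous on a neighbourhood of A x B,
   differentiable in the first variable there, with continuous partial
   derivative D_1 f (expressed through all directional derivatives 'D_w). *)
Definition regular_first (R : realType) (n m : nat)
  (A : set 'rV[R]_n) (B : set 'rV[R]_m) (f : 'rV[R]_n -> 'rV[R]_m -> R) : Prop :=
  exists U : set ('rV[R]_n * 'rV[R]_m),
    [/\ open U, A `*` B `<=` U,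
        (forall q, U q -> {for q, continuous (fun r => f r.1 r.2)}),
        (forall q, U q -> differentiable (fun x => f x q.2) q.1) &
        (forall (w : 'rV[R]_n) q, U q ->
           {for q, continuous (fun r => 'D_w (fun x => f x r.2) r.1)})].

From HB Require Import structures.
From mathcomp Require Import all_boot all_order all_algebra.
From mathcomp Require Import all_classical all_reals all_analysis.
From mathcomp Require Import lra ring.
Import Order.TTheory GRing.Theory Num.Theory.
Import numFieldNormedType.Exports.
Local Open Scope classical_set_scope.
Local Open Scope ring_scope.

Set Implicit Arguments.
Unset Strict Implicit.
Unset Printing Implicit Defensive.

(* Convexity: p^sharp is a supremum and p^flat an infimum of functions affine
   in p, and integration is linear.
   Existence: a price system p can be replaced, without increasing I, by
   clamping it between a and b, then by the u-conjugate of its own p^sharp,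
   clamped again.  The resulting functions, clamped u-conjugates of uniformly
   bounded functions on X, form a uniformly bounded equicontinuous family on
   the compact Z0.  By Arzela-Ascoli a minimizing sequence in it clusters
   uniformly at some g; the constraints a <= g <= b on Z1 pass to the limit and
   I is Lipschitz for the sup norm, so the extension of g by 0 is an
   admissible minimizer. *)

Section Clamp.
Variable R : realFieldType.
Implicit Types a b x : R.

Definition clamp a b x : R := Num.min (Num.max x a) b.

Lemma clamp_cases a b x : [\/ clamp a b x = b /\ b <= Num.max x a,
  clamp a b x = x /\ a <= x <= b | clamp a b x = a /\ x <= a <= b].
Proof.
rewrite /clamp; case: (leP x a) => xa; case: leP => h;
  [apply: Or31 | apply: Or33 | apply: Or31 | apply: Or32];
  split => //; rewrite ?ltW //; try (apply/andP; split); lra.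
Qed.

Lemma clamp_le a b x : clamp a b x <= b.
Proof. by case: (clamp_cases a b x) => -[-> ?] //; lra. Qed.

Lemma clamp_ge a b x : a <= b -> a <= clamp a b x.
Proof. by move=> ab; case: (clamp_cases a b x) => -[-> ?] //; lra. Qed.

Lemma clamp_ge_min a b x : Num.min a b <= clamp a b x.
Proof.
by case: (clamp_cases a b x) => -[-> ?]; rewrite ge_min ?lexx ?orbT //; lra.
Qed.

Lemma norm_clamp_le a b x : `|clamp a b x| <= `|a| + `|b|.
Proof.
have := ler_norm a; have := ler_norm b; have := ler_norm (- a); have := ler_norm (- b).
rewrite !normrN; case: (clamp_cases a b x) => -[-> h]; rewrite ler_norml;
  try (move: h => /andP [h1 h2]); move=> *; apply/andP; split; lra.
Qed.

Lemma clamp_ge_cases a b x : x <= clamp a b x \/ clamp a b x = b.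
Proof.
case: (clamp_cases a b x) => -[-> h]; [by right | by left | left].
by case/andP: h.
Qed.

Lemma clamp_le_cases a b x : clamp a b x <= x \/ clamp a b x <= a.
Proof.
case: (clamp_cases a b x) => -[-> h]; [ | by left | by right].
by move: h; rewrite le_max => /orP [] ?; [left | right].
Qed.

Lemma dist_max_le x a x' a' :
  `|Num.max x a - Num.max x' a'| <= `|x - x'| + `|a - a'|.
Proof.
have := ler_norm (x - x'); have := ler_norm (a - a').
have := ler_norm (x' - x); have := ler_norm (a' - a); rewrite !(distrC x') !(distrC a').
by rewrite ler_norml; case: (leP x a); case: (leP x' a') => * ; apply/andP; split; lra.
Qed.

Lemma dist_min_le x b x' b' :
  `|Num.min x b - Num.min x' b'| <= `|x - x'| + `|b - b'|.
Proof.
have := ler_norm (x - x'); have := ler_norm (b - b').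
have := ler_norm (x' - x); have := ler_norm (b' - b); rewrite !(distrC x') !(distrC b').
by rewrite ler_norml; case: (leP x b); case: (leP x' b') => * ; apply/andP; split; lra.
Qed.

Lemma dist_clamp_le a b x a' b' x' :
  `|clamp a b x - clamp a' b' x'| <= `|x - x'| + `|a - a'| + `|b - b'|.
Proof.
apply: (le_trans (dist_min_le _ _ _ _)); rewrite lerD2r.
exact: dist_max_le.
Qed.

End Clamp.

Section SupImage.
Context {R : realType} {I : Type}.
Implicit Types (S : set I) (g h : I -> R).

Lemma le_sup_image S g c i : S i -> (forall j, S j -> g j <= c) ->
  g i <= sup [set g j | j in S].
Proof.
move=> Si gc; apply: ub_le_sup; last by exists i.
by exists c => _ [j Sj <-]; apply: gc.
Qed.

Lemma sup_image_le S g c : S !=set0 -> (forall j, S j -> g j <= c) ->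
  sup [set g j | j in S] <= c.
Proof.
move=> [i Si] gc; apply: ge_sup; first by exists (g i), i.
by move=> _ [j Sj <-]; apply: gc.
Qed.

Lemma inf_image_le S g c i : S i -> (forall j, S j -> c <= g j) ->
  inf [set g j | j in S] <= g i.
Proof.
move=> Si gc; apply: ge_inf; last by exists i.
by exists c => _ [j Sj <-]; apply: gc.
Qed.

Lemma le_inf_image S g c : S !=set0 -> (forall j, S j -> c <= g j) ->
  c <= inf [set g j | j in S].
Proof.
move=> [i Si] gc; apply: lb_le_inf; first by exists (g i), i.
by move=> _ [j Sj <-]; apply: gc.
Qed.

Lemma dist_sup_image_le S g h c e : S !=set0 ->
  (forall j, S j -> `|h j| <= c) -> (forall j, S j -> `|g j - h j| <= e) ->
  `|sup [set g j | j in S] - sup [set h j | j in S]| <= e.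
Proof.
move=> S0 hc gh.
have {}hc j : S j -> h j <= c by move=> Sj; exact: le_trans (ler_norm _) (hc j Sj).
have {}gh j : S j -> g j <= h j + e /\ h j <= g j + e.
  by move=> Sj; move: (gh j Sj); rewrite ler_norml => /andP [? ?]; split; lra.
have gc j : S j -> g j <= c + e.
  by move=> Sj; have [? _] := gh j Sj; have := hc j Sj; lra.
have sg : sup [set g j | j in S] <= sup [set h j | j in S] + e.
  apply: sup_image_le => // j Sj.
  have [? _] := gh j Sj; have := le_sup_image Sj hc; lra.
have sh : sup [set h j | j in S] <= sup [set g j | j in S] + e.
  apply: sup_image_le => // j Sj.
  have [_ ?] := gh j Sj; have := le_sup_image Sj gc; lra.
by rewrite ler_norml; apply/andP; split; lra.
Qed.

Lemma dist_inf_image_le S g h c e : S !=set0 ->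
  (forall j, S j -> `|h j| <= c) -> (forall j, S j -> `|g j - h j| <= e) ->
  `|inf [set g j | j in S] - inf [set h j | j in S]| <= e.
Proof.
move=> S0 hc gh.
have negE k : -%R @` [set k j | j in S] = [set - k j | j in S].
  by rewrite image_comp.
rewrite /inf !negE opprK addrC distrC.
apply: (dist_sup_image_le S0 (c := c)) => j Sj; first by rewrite normrN hc.
by rewrite -opprD normrN gh.
Qed.

End SupImage.

Definition unif_cont_on {R : realType} {T : pseudoMetricType R}
    (A : set T) (f : T -> R) : Prop :=
  forall e, 0 < e -> exists2 d, 0 < d &
    forall a b, A a -> A b -> ball a d b -> `|f a - f b| <= e.

Section UniformContinuity.
Context {R : realType} {T : pseudoMetricType R}.
Implicit Types (A : set T) (f : T -> R).

Lemma compact_unif_cont A f : compact A ->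
  (forall a, A a -> {for a, continuous f}) -> unif_cont_on A f.
Proof.
move=> /compact_near_coveringP cA cf e e0.
pose P d x := forall b, ball x d b -> `|f x - f b| < e.
have : \forall d \near (0:R)^'+, A `<=` P d.
  apply: (cA R (0:R)^'+ P) => x Ax.
  have := cf x Ax (ball (f x) (e/2)) (nbhsx_ballx _ _ _).
  rewrite divr_gt0 // => /(_ isT) /nbhs_ballP [eta /= eta0 Heta].
  exists (ball x (eta/2), [set d | 0 < d < eta/2]); first split.
  - by apply: nbhsx_ballx; rewrite divr_gt0.
  - exists (eta/2) => /=; first by rewrite divr_gt0.
    move=> d /= + d0; rewrite d0 /=.
    by rewrite /ball /= sub0r normrN gtr0_norm.
  move=> [x' d] [/= xx' /andP [d0 deta]] b x'b.
  have xb : ball x eta b.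
    rewrite (splitr eta); apply: ball_triangle xx' _.
    by apply: le_ball x'b; rewrite ltW.
  have le2 : eta/2 <= eta by lra.
  have := Heta _ (le_ball le2 xx'); have := Heta _ xb; rewrite /ball /= => h1 h2.
  rewrite (_ : f x' - f b = (f x - f b) - (f x - f x')); last by ring.
  by apply: (le_lt_trans (ler_normB _ _)); rewrite [e]splitr ltrD.
move=> /(filterI (nbhs_right_gt 0)) /filter_ex [d [d0 Pd]].
by exists d => // a b Aa _ ab; rewrite ltW // (Pd a Aa).
Qed.

Lemma unif_cont_within A f : unif_cont_on A f -> {within A, continuous f}.
Proof.
move=> fA x; apply/cvg_ballP => e e0.
have [d d0 Hd] := fA _ (divr_gt0 e0 (ltr0Sn _ 1)).
apply/nbhs_ballP; exists d => //= y.
rewrite ball_subspace_ball /subspace_ball; case: ifP => /asboolP Ax; last first.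
  by move=> ->; apply: ballxx.
by move=> [Ay xy]; rewrite /ball /=; apply: le_lt_trans (Hd _ _ Ax Ay xy) _; lra.
Qed.

End UniformContinuity.

Lemma compact_within_continuous_bounded {R : realType} {T : topologicalType}
    (A : set T) (f : T -> R) :
  compact A -> {within A, continuous f} -> exists M, forall a, A a -> `|f a| <= M.
Proof.
move=> cA cf; have /compact_bounded [M [_ HM]] := continuous_compact cf cA.
by exists (M + 1) => a Aa; apply: HM; [rewrite ltrDl | exists a].
Qed.

Section RintegralLemmas.
Context {d : measure_display} {T : measurableType d} {R : realType}.
Variables (mu : {finite_measure set T -> \bar R}) (D : set T).
Hypothesis mD : measurable D.
Implicit Types (f g h : T -> R).

Lemma integrable_lincomb g h s t :
  mu.-integrable D (EFin \o g) -> mu.-integrable D (EFin \o h) ->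
  mu.-integrable D (EFin \o (fun x => s * g x + t * h x)).
Proof.
move=> ig ih; rewrite (_ : _ \o _ = (fun x => s%:E * (EFin \o g) x)
  \+ (fun x => t%:E * (EFin \o h) x))%E; last first.
  by apply/funext => x /=; rewrite EFinD !EFinM.
by apply: integrableD => //; apply: integrableZl.
Qed.

Lemma Rintegral_lincomb g h s t :
  mu.-integrable D (EFin \o g) -> mu.-integrable D (EFin \o h) ->
  \int[mu]_(x in D) (s * g x + t * h x) =
  s * \int[mu]_(x in D) g x + t * \int[mu]_(x in D) h x.
Proof.
move=> ig ih; rewrite -!RintegralZl // RintegralD //.
  by rewrite (_ : _ \o _ = (fun x => s%:E * (EFin \o g) x))%E ?integrableZl //;
    apply/funext => x /=; rewrite EFinM.
by rewrite (_ : _ \o _ = (fun x => t%:E * (EFin \o h) x))%E ?integrableZl //;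
  apply/funext => x /=; rewrite EFinM.
Qed.

Lemma Rintegral_le_shift f g c :
  mu.-integrable D (EFin \o f) -> mu.-integrable D (EFin \o g) ->
  (forall x, D x -> f x <= g x + c) ->
  \int[mu]_(x in D) f x <= \int[mu]_(x in D) g x + c * fine (mu D).
Proof.
move=> iF iG fg; have iC := finite_measure_integrable_cst mu 1 mD.
apply: (@le_trans _ _ (\int[mu]_(x in D) (1 * g x + c * cst 1 x))).
  apply: le_Rintegral => //; first exact: integrable_lincomb.
  by move=> x Dx; rewrite mul1r /= mulr1 fg.
by rewrite Rintegral_lincomb // Rintegral_cst // !mul1r.
Qed.

End RintegralLemmas.

Section BorelRV.
Context {R : realType} {n : nat}.
Implicit Types (A : set 'rV[R]_n) (f : 'rV[R]_n -> R).

Lemma closed_measurable A : closed A -> measurable (A : set (borelRV R n)).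
Proof.
move=> clA; rewrite -(setCK A); apply: measurableC; apply: sub_sigma_algebra.
exact: closed_openC.
Qed.

Lemma compact_measurable A : compact A -> measurable (A : set (borelRV R n)).
Proof.
move=> cA; apply: closed_measurable.
by apply: compact_closed => //; exact: norm_hausdorff.
Qed.

Lemma unif_cont_measurable_fun A f : closed A -> unif_cont_on A f ->
  measurable_fun (A : set (borelRV R n)) (f : borelRV R n -> R).
Proof.
move=> clA fA.
apply: (measurability _ (measurable_realfun.RGenOpens.measurableE R)).
move=> _ [B [x [y ->]] <-].
have oO : open `]x, y[%classic by exact: interval_open.
set O := `]x, y[%classic in oO *.
(* [W] is open and meets [A] exactly where [f] lands in [O]. *)
pose W := [set w | exists a, A a /\ exists2 d, 0 < d &
  ball a d w /\ forall w', A w' -> ball a d w' -> O (f w')].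
have -> : A `&` f @^-1` O = A `&` W.
  apply/seteqP; split => w [Aw Ow]; split => //; last first.
    by case: Ow => a [Aa [d d0 [aw Hd]]]; apply: Hd.
  have /nbhs_ballP [r /= r0 Hr] := oO _ Ow.
  have [d d0 Hd] := fA _ (divr_gt0 r0 (ltr0Sn _ 1)).
  exists w; split => //; exists d => //; split; first exact: ballxx.
  move=> w' Aw' ww'; apply: Hr; rewrite /ball /=.
  by apply: le_lt_trans (Hd _ _ Aw Aw' ww') _; lra.
apply: measurableI; first exact: closed_measurable.
apply: sub_sigma_algebra; rewrite openE => w [a [Aa [d d0 [aw Hd]]]].
have := ball_open a d _ aw; apply: filterS => w' aw'.
by exists a; split => //; exists d.
Qed.

Lemma unif_cont_bounded_integrable (mu : {finite_measure set (borelRV R n) -> \bar R})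
    A f M :
  compact A -> unif_cont_on A f -> (forall a, A a -> `|f a| <= M) ->
  mu.-integrable (A : set (borelRV R n)) (EFin \o (f : borelRV R n -> R)).
Proof.
move=> cA fA fM.
have clA : closed A by apply: compact_closed => //; exact: norm_hausdorff.
have mA := compact_measurable cA.
apply: measurable_bounded_integrable => //.
- by have /fin_numPlt/andP [_ ->] := fin_num_measure mu _ mA.
- exact: unif_cont_measurable_fun.
- exists M; split; first by rewrite num_real.
  by move=> K MK x Ax; apply: le_trans (fM x Ax) _; rewrite ltW.
Qed.

End BorelRV.

Section PriceSystems.
Variables (R : realType) (d1 d2 d3 : nat).
Variables (X : set 'rV[R]_d1) (Y : set 'rV[R]_d2) (Z0 : set 'rV[R]_d3).
Variables (u : 'rV[R]_d1 -> 'rV[R]_d3 -> R) (v : 'rV[R]_d2 -> 'rV[R]_d3 -> R).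
Local Notation V := 'rV[R]_d3.
Local Notation Z := (Zset Z0).
Local Notation admissible := (admissible X Y Z0 u v).

Lemma admissible_convex p q t : admissible p -> admissible q -> 0 <= t <= 1 ->
  admissible (fun z => t * p z + (1 - t) * q z).
Proof.
move=> [[cp [pd ps]] pab] [[cq [qd qs]] qab] /andP [t0 t1].
split; first (split; last split).
- move=> z; apply: cvgD; apply: cvgM;
    [exact: cvg_cst | exact: cp | exact: cvg_cst | exact: cq].
- by rewrite pd qd !mulr0 addr0.
- by rewrite ps qs !mulr0 addr0.
move=> z Z1z; have /andP [a1 a2] := pab z Z1z; have /andP [b1 b2] := qab z Z1z.
have h1 : 0 <= t * (p z - afun Y v z) by apply: mulr_ge0; lra.
have h2 : 0 <= (1 - t) * (q z - afun Y v z) by apply: mulr_ge0; lra.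
have h3 : 0 <= t * (bfun X u z - p z) by apply: mulr_ge0; lra.
have h4 : 0 <= (1 - t) * (bfun X u z - q z) by apply: mulr_ge0; lra.
by apply/andP; split; nra.
Qed.

Hypotheses (cX : compact X) (cY : compact Y) (cZ : compact Z0).
Hypotheses (nX : X !=set0) (nY : Y !=set0).
Hypothesis ucu : unif_cont_on (X `*` Z0) (fun q => u q.1 q.2).
Hypothesis ucv : unif_cont_on (Y `*` Z0) (fun q => v q.1 q.2).
Variables (Mu Mv : R).
Hypothesis HMu : forall x z, X x -> Z0 z -> `|u x z| <= Mu.
Hypothesis HMv : forall y z, Y y -> Z0 z -> `|v y z| <= Mv.

Lemma u_equicont_x e : 0 < e -> exists2 d, 0 < d & forall x x' z,
  X x -> X x' -> Z0 z -> ball x d x' -> `|u x z - u x' z| <= e.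
Proof.
move=> e0; have [d d0 Hd] := ucu e0; exists d => // x x' z Xx Xx' Zz xx'.
by apply: (Hd (x, z) (x', z)) => //; split => //; exact: ballxx.
Qed.

Lemma u_equicont_z e : 0 < e -> exists2 d, 0 < d & forall x z z',
  X x -> Z0 z -> Z0 z' -> ball z d z' -> `|u x z - u x z'| <= e.
Proof.
move=> e0; have [d d0 Hd] := ucu e0; exists d => // x z z' Xx Zz Zz' zz'.
by apply: (Hd (x, z) (x, z')) => //; split => //; exact: ballxx.
Qed.

Lemma v_equicont_y e : 0 < e -> exists2 d, 0 < d & forall y y' z,
  Y y -> Y y' -> Z0 z -> ball y d y' -> `|v y z - v y' z| <= e.
Proof.
move=> e0; have [d d0 Hd] := ucv e0; exists d => // y y' z Yy Yy' Zz yy'.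
by apply: (Hd (y, z) (y', z)) => //; split => //; exact: ballxx.
Qed.

Lemma v_equicont_z e : 0 < e -> exists2 d, 0 < d & forall y z z',
  Y y -> Z0 z -> Z0 z' -> ball z d z' -> `|v y z - v y z'| <= e.
Proof.
move=> e0; have [d d0 Hd] := ucv e0; exists d => // y z z' Yy Zz Zz' zz'.
by apply: (Hd (y, z) (y, z')) => //; split => //; exact: ballxx.
Qed.

Let Bu := `|Mu| + 1.
Let Bv := `|Mv| + 1.

Definition price_bounded (p : Zpt V -> R) (P : R) := forall z, Z z -> `|p z| <= P.

Lemma Z_nonempty : Z !=set0. Proof. by exists Zd. Qed.

Lemma price_system_bounded p : price_system Z0 p -> exists P, price_bounded p P.
Proof.
move=> [cp [pd ps]]; have [M HM] := compact_within_continuous_bounded cZ cp.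
exists `|M| => -[z0||] /= Zz; rewrite ?pd ?ps ?normr0 //.
exact: le_trans (HM _ Zz) (ler_norm _).
Qed.

Lemma norm_uext_le x z : X x -> Z z -> `|uext u x z| <= Bu.
Proof.
rewrite /Bu; case: z => [z0||] /= Xx Zz; rewrite ?normr0 ?normrN ?normr1 ?lerDr //.
by have := HMu Xx Zz; have := ler_norm Mu; lra.
Qed.

Lemma norm_vext_le y z : Y y -> Z z -> `|vext v y z| <= Bv.
Proof.
rewrite /Bv; case: z => [z0||] /= Yy Zz; rewrite ?normr0 ?normr1 ?lerDr //.
by have := HMv Yy Zz; have := ler_norm Mv; lra.
Qed.

Lemma psharp_le p x c : (forall z, Z z -> uext u x z - p z <= c) ->
  psharp Z0 u p x <= c.
Proof. exact/sup_image_le/Z_nonempty. Qed.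

Lemma le_pflat p y c : (forall z, Z z -> c <= vext v y z - p z) ->
  c <= pflat Z0 v p y.
Proof. exact/le_inf_image/Z_nonempty. Qed.

Section Conjugates.
Variables (p : Zpt V -> R) (P : R).
Hypothesis pP : price_bounded p P.

Lemma norm_uext_sub_le x z : X x -> Z z -> `|uext u x z - p z| <= Bu + P.
Proof.
move=> Xx Zz; apply: le_trans (ler_normB _ _) _.
by rewrite lerD ?norm_uext_le ?pP.
Qed.

Lemma norm_vext_sub_le y z : Y y -> Z z -> `|vext v y z - p z| <= Bv + P.
Proof.
move=> Yy Zz; apply: le_trans (ler_normB _ _) _.
by rewrite lerD ?norm_vext_le ?pP.
Qed.

Lemma le_psharp x z : X x -> Z z -> uext u x z - p z <= psharp Z0 u p x.
Proof.
move=> Xx Zz.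
apply: (le_sup_image (g := fun z => uext u x z - p z) (c := Bu + P)) => // j Zj.
exact: le_trans (ler_norm _) (norm_uext_sub_le Xx Zj).
Qed.

Lemma pflat_le y z : Y y -> Z z -> pflat Z0 v p y <= vext v y z - p z.
Proof.
move=> Yy Zz.
apply: (inf_image_le (g := fun z => vext v y z - p z) (c := - (Bv + P))) => // j Zj.
by rewrite lerNl; apply: le_trans (ler_norm _) _; rewrite normrN norm_vext_sub_le.
Qed.

Lemma norm_psharp_le x : X x -> `|psharp Z0 u p x| <= Bu + P.
Proof.
move=> Xx; rewrite ler_norml; apply/andP; split.
  have := norm_uext_sub_le Xx (I : Z Zd); rewrite ler_norml => /andP [+ _].
  by have := le_psharp Xx (I : Z Zd); lra.
apply: psharp_le => z Zz.
exact: le_trans (ler_norm _) (norm_uext_sub_le Xx Zz).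
Qed.

Lemma norm_pflat_le y : Y y -> `|pflat Z0 v p y| <= Bv + P.
Proof.
move=> Yy; rewrite ler_norml; apply/andP; split.
  apply: le_pflat => z Zz; have := norm_vext_sub_le Yy Zz; rewrite ler_norml.
  by case/andP.
have := norm_vext_sub_le Yy (I : Z Zs); rewrite ler_norml => /andP [_ +].
by have := pflat_le Yy (I : Z Zs); lra.
Qed.

Lemma psharp_unif_cont : unif_cont_on X (psharp Z0 u p).
Proof.
move=> e e0; have [d d0 Hd] := u_equicont_x e0; exists d => // x x' Xx Xx' xx'.
apply: (dist_sup_image_le (g := fun z => uext u x z - p z)
  (h := fun z => uext u x' z - p z) Z_nonempty (c := Bu + P)) => z Zz.
  exact: norm_uext_sub_le.
rewrite opprB addrA subrK; case: z Zz => [z0||] /= Zz; first exact: Hd.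
  by rewrite subrr normr0 ltW.
by rewrite subrr normr0 ltW.
Qed.

Lemma pflat_unif_cont : unif_cont_on Y (pflat Z0 v p).
Proof.
move=> e e0; have [d d0 Hd] := v_equicont_y e0; exists d => // y y' Yy Yy' yy'.
apply: (dist_inf_image_le (g := fun z => vext v y z - p z)
  (h := fun z => vext v y' z - p z) Z_nonempty (c := Bv + P)) => z Zz.
  exact: norm_vext_sub_le.
rewrite opprB addrA subrK; case: z Zz => [z0||] /= Zz; first exact: Hd.
  by rewrite subrr normr0 ltW.
by rewrite subrr normr0 ltW.
Qed.

Lemma dist_psharp_le q e x : X x -> (forall z, Z z -> `|q z - p z| <= e) ->
  `|psharp Z0 u q x - psharp Z0 u p x| <= e.
Proof.
move=> Xx qp; apply: (dist_sup_image_le (g := fun z => uext u x z - q z)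
  (h := fun z => uext u x z - p z) Z_nonempty (c := Bu + P)) => z Zz.
  exact: norm_uext_sub_le.
rewrite (_ : _ - _ = p z - q z); last by ring.
by rewrite distrC qp.
Qed.

Lemma dist_pflat_le q e y : Y y -> (forall z, Z z -> `|q z - p z| <= e) ->
  `|pflat Z0 v q y - pflat Z0 v p y| <= e.
Proof.
move=> Yy qp; apply: (dist_inf_image_le (g := fun z => vext v y z - q z)
  (h := fun z => vext v y z - p z) Z_nonempty (c := Bv + P)) => z Zz.
  exact: norm_vext_sub_le.
rewrite (_ : _ - _ = p z - q z); last by ring.
by rewrite distrC qp.
Qed.

End Conjugates.

Lemma psharp_convex p q P Q t x : price_bounded p P -> price_bounded q Q ->
  X x -> 0 <= t <= 1 ->
  psharp Z0 u (fun z => t * p z + (1 - t) * q z) x <=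
  t * psharp Z0 u p x + (1 - t) * psharp Z0 u q x.
Proof.
move=> pP qQ Xx /andP [t0 t1]; apply: psharp_le => z Zz.
by have := le_psharp pP Xx Zz; have := le_psharp qQ Xx Zz; nra.
Qed.

Lemma pflat_concave p q P Q t y : price_bounded p P -> price_bounded q Q ->
  Y y -> 0 <= t <= 1 ->
  t * pflat Z0 v p y + (1 - t) * pflat Z0 v q y <=
  pflat Z0 v (fun z => t * p z + (1 - t) * q z) y.
Proof.
move=> pP qQ Yy /andP [t0 t1]; apply: le_pflat => z Zz.
by have := pflat_le pP Yy Zz; have := pflat_le qQ Yy Zz; nra.
Qed.

Variables (mu : {finite_measure set (borelRV R d1) -> \bar R})
  (nu : {finite_measure set (borelRV R d2) -> \bar R}).
Local Notation Icost := (Ifun mu nu X Y Z0 u v).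

Let mX : measurable (X : set (borelRV R d1)) := compact_measurable cX.
Let mY : measurable (Y : set (borelRV R d2)) := compact_measurable cY.

Lemma psharp_integrable p P : price_bounded p P ->
  mu.-integrable (X : set (borelRV R d1)) (EFin \o (psharp Z0 u p : borelRV R d1 -> R)).
Proof.
move=> pP; apply: (unif_cont_bounded_integrable mu cX (psharp_unif_cont pP)).
exact: (norm_psharp_le pP).
Qed.

Lemma pflat_integrable p P : price_bounded p P ->
  nu.-integrable (Y : set (borelRV R d2)) (EFin \o (pflat Z0 v p : borelRV R d2 -> R)).
Proof.
move=> pP; apply: (unif_cont_bounded_integrable nu cY (pflat_unif_cont pP)).
exact: (norm_pflat_le pP).
Qed.

Let KI := fine (mu X) + fine (nu Y).

Lemma KI_ge0 : 0 <= KI.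
Proof. by rewrite addr_ge0 // fine_ge0 // measure_ge0. Qed.

Lemma Ifun_le_shift p q P Q c : price_bounded p P -> price_bounded q Q ->
  (forall x, X x -> psharp Z0 u q x <= psharp Z0 u p x + c) ->
  (forall y, Y y -> pflat Z0 v p y <= pflat Z0 v q y + c) ->
  Icost q <= Icost p + c * KI.
Proof.
move=> pP qQ qp pq; rewrite /Ifun /KI.
have := Rintegral_le_shift mX (psharp_integrable qQ) (psharp_integrable pP) qp.
have := Rintegral_le_shift mY (pflat_integrable pP) (pflat_integrable qQ) pq.
lra.
Qed.

Lemma Ifun_le p q P Q : price_bounded p P -> price_bounded q Q ->
  (forall x, X x -> psharp Z0 u q x <= psharp Z0 u p x) ->
  (forall y, Y y -> pflat Z0 v p y <= pflat Z0 v q y) ->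
  Icost q <= Icost p.
Proof.
move=> pP qQ qp pq; rewrite -[Icost p]addr0 -(mul0r KI).
apply: Ifun_le_shift pP qQ _ _ => [x Xx | y Yy]; rewrite addr0.
  exact: qp.
exact: pq.
Qed.

Lemma price_bounded_convex p q P Q t : price_bounded p P -> price_bounded q Q ->
  0 <= t <= 1 -> price_bounded (fun z => t * p z + (1 - t) * q z) (P + Q).
Proof.
move=> pP qQ /andP [t0 t1] z Zz; apply: le_trans (ler_normD _ _) _.
rewrite !normrM (ger0_norm t0) (@ger0_norm _ (1 - t)); last by lra.
have := pP z Zz; have := qQ z Zz; have := normr_ge0 (p z); have := normr_ge0 (q z).
nra.
Qed.

Lemma Ifun_convex p q P Q t : price_bounded p P -> price_bounded q Q -> 0 <= t <= 1 ->
  Icost (fun z => t * p z + (1 - t) * q z) <= t * Icost p + (1 - t) * Icost q.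
Proof.
move=> pP qQ t01; have pqt := price_bounded_convex pP qQ t01.
have isp := psharp_integrable pP; have isq := psharp_integrable qQ.
have ifp := pflat_integrable pP; have ifq := pflat_integrable qQ.
rewrite /Ifun.
have := le_Rintegral mX (psharp_integrable pqt) (integrable_lincomb _ t (1 - t) isp isq)
  (fun x Xx => psharp_convex pP qQ Xx t01).
have := le_Rintegral mY (integrable_lincomb _ t (1 - t) ifp ifq) (pflat_integrable pqt)
  (fun y Yy => pflat_concave pP qQ Yy t01).
by rewrite !Rintegral_lincomb // => /(_ mY) ? /(_ mX) ?; lra.
Qed.

Lemma Ifun_ge0 p P : price_bounded p P -> p Zd = 0 -> p Zs = 0 -> 0 <= Icost p.
Proof.
move=> pP pd ps; rewrite /Ifun subr_ge0; apply: (@le_trans _ _ 0).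
  rewrite -(mul0r (fine (nu Y))) -(Rintegral_cst nu mY).
  apply: le_Rintegral => //; first exact: pflat_integrable pP.
    exact: finite_measure_integrable_cst.
  by move=> y Yy; have := pflat_le pP Yy (I : Z Zs); rewrite /= ps subr0.
apply: Rintegral_ge0 => x Xx.
by have := le_psharp pP Xx (I : Z Zd); rewrite /= pd subr0.
Qed.

Definition b0 (z : V) : R := bfun X u (ZR z).
Definition a0 (z : V) : R := afun Y v (ZR z).

Lemma le_b0 x z : X x -> Z0 z -> u x z <= b0 z.
Proof.
move=> Xx Zz; apply: (le_sup_image (g := fun x => uext u x (ZR z)) (c := Mu)) => // j Xj.
exact: le_trans (ler_norm _) (HMu Xj Zz).
Qed.

Lemma b0_le z c : (forall x, X x -> u x z <= c) -> b0 z <= c.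
Proof. exact: (sup_image_le (g := fun x => uext u x (ZR z))). Qed.

Lemma a0_le y z : Y y -> Z0 z -> a0 z <= v y z.
Proof.
move=> Yy Zz.
apply: (inf_image_le (g := fun y => vext v y (ZR z)) (c := - Mv)) => // j Yj.
by rewrite lerNl; apply: le_trans (ler_norm _) _; rewrite normrN HMv.
Qed.

Lemma le_a0 z c : (forall y, Y y -> c <= v y z) -> c <= a0 z.
Proof. exact: (le_inf_image (g := fun y => vext v y (ZR z))). Qed.

Lemma norm_b0_le z : Z0 z -> `|b0 z| <= Mu.
Proof.
move=> Zz; have [x0 Xx0] := nX; rewrite ler_norml; apply/andP; split.
  apply: le_trans (le_b0 Xx0 Zz); have := HMu Xx0 Zz; rewrite ler_norml.
  by case/andP.
by apply: b0_le => x Xx; apply: le_trans (ler_norm _) (HMu Xx Zz).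
Qed.

Lemma norm_a0_le z : Z0 z -> `|a0 z| <= Mv.
Proof.
move=> Zz; have [y0 Yy0] := nY; rewrite ler_norml; apply/andP; split.
  by apply: le_a0 => y Yy; have := HMv Yy Zz; rewrite ler_norml; case/andP.
by apply: le_trans (a0_le Yy0 Zz) _; apply: le_trans (ler_norm _) (HMv Yy0 Zz).
Qed.

Lemma b0_unif_cont : unif_cont_on Z0 b0.
Proof.
move=> e e0; have [d d0 Hd] := u_equicont_z e0; exists d => // z z' Zz Zz' zz'.
apply: (dist_sup_image_le (g := fun x => uext u x (ZR z))
  (h := fun x => uext u x (ZR z')) nX (c := Mu)) => x Xx /=; last exact: Hd.
exact: HMu.
Qed.

Lemma a0_unif_cont : unif_cont_on Z0 a0.
Proof.
move=> e e0; have [d d0 Hd] := v_equicont_z e0; exists d => // z z' Zz Zz' zz'.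
apply: (dist_inf_image_le (g := fun y => vext v y (ZR z))
  (h := fun y => vext v y (ZR z')) nY (c := Mv)) => y Yy /=; last exact: Hd.
exact: HMv.
Qed.

Lemma Z1set_ZR z : Z1set X Y Z0 u v z ->
  exists2 z0, z = ZR z0 & Z0 z0 /\ a0 z0 <= b0 z0.
Proof.
case: z => [z0||] [Zz ab]; first by exists z0.
- have : bfun X u Zd <= 0 by apply: (sup_image_le (g := fun x => uext u x Zd)).
  have : 1 <= afun Y v Zd by apply: (le_inf_image (g := fun y => vext v y Zd)).
  lra.
- have : bfun X u Zs <= -1 by apply: (sup_image_le (g := fun x => uext u x Zs)).
  have : 0 <= afun Y v Zs by apply: (le_inf_image (g := fun y => vext v y Zs)).
  lra.
Qed.

Definition price_of (g : V -> R) (z : Zpt V) : R :=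
  match z with ZR z0 => g z0 | _ => 0 end.

Definition truncate (g : V -> R) (z : V) : R := clamp (a0 z) (b0 z) (g z).

Let PB := `|Mu| + `|Mv|.

Lemma truncate_price_bounded g : price_bounded (price_of (truncate g)) PB.
Proof.
case=> [z0||] /= Zz; rewrite ?normr0 ?addr_ge0 //.
apply: le_trans (norm_clamp_le _ _ _) _; rewrite addrC lerD //.
- exact: le_trans (norm_b0_le Zz) (ler_norm _).
- exact: le_trans (norm_a0_le Zz) (ler_norm _).
Qed.

(* Clamping down to b cannot raise p^sharp since u <= b, and clamping up to a
   cannot lower p^flat since a <= v. *)
Lemma Ifun_truncate_le p P : price_bounded p P -> p Zd = 0 -> p Zs = 0 ->
  Icost (price_of (truncate (fun z => p (ZR z)))) <= Icost p.
Proof.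
move=> pP pd ps; apply: (Ifun_le pP (truncate_price_bounded _)).
- move=> x Xx; have sharp0 := le_psharp pP Xx (I : Z Zd).
  apply: psharp_le => -[z0||] Zz /=; last 2 first.
  + by rewrite /= pd in sharp0.
  + by have := le_psharp pP Xx (I : Z Zs); rewrite /= ps.
  rewrite /truncate; case: (clamp_ge_cases (a0 z0) (b0 z0) (p (ZR z0))) => [h|->].
    by have := le_psharp pP Xx Zz; rewrite /=; lra.
  by rewrite /= pd in sharp0; have := le_b0 Xx Zz; lra.
- move=> y Yy; have flat0 := pflat_le pP Yy (I : Z Zs).
  apply: le_pflat => -[z0||] Zz /=; last 2 first.
  + by have := pflat_le pP Yy (I : Z Zd); rewrite /= pd.
  + by rewrite /= ps in flat0.
  rewrite /truncate; case: (clamp_le_cases (a0 z0) (b0 z0) (p (ZR z0))) => h.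
    by have := pflat_le pP Yy Zz; rewrite /=; lra.
  by rewrite /= ps in flat0; have := a0_le Yy Zz; lra.
Qed.

Definition uconj (phi : 'rV[R]_d1 -> R) (z : V) : R :=
  sup [set u x z - phi x | x in X].

Section UConjugate.
Variables (phi : 'rV[R]_d1 -> R) (C : R).
Hypothesis phiC : forall x, X x -> `|phi x| <= C.

Lemma norm_u_sub_le x z : X x -> Z0 z -> `|u x z - phi x| <= Mu + C.
Proof. by move=> Xx Zz; apply: le_trans (ler_normB _ _) _; rewrite lerD ?HMu ?phiC. Qed.

Lemma le_uconj x z : X x -> Z0 z -> u x z - phi x <= uconj phi z.
Proof.
move=> Xx Zz.
apply: (le_sup_image (g := fun x => u x z - phi x) (c := Mu + C)) => // j Xj.
exact: le_trans (ler_norm _) (norm_u_sub_le Xj Zz).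
Qed.

Lemma uconj_le z c : (forall x, X x -> u x z - phi x <= c) -> uconj phi z <= c.
Proof. exact: (sup_image_le (g := fun x => u x z - phi x)). Qed.

Lemma norm_uconj_le z : Z0 z -> `|uconj phi z| <= Mu + C.
Proof.
move=> Zz; have [x0 Xx0] := nX; rewrite ler_norml; apply/andP; split.
  apply: le_trans (le_uconj Xx0 Zz); have := norm_u_sub_le Xx0 Zz.
  by rewrite ler_norml; case/andP.
by apply: uconj_le => x Xx; apply: le_trans (ler_norm _) (norm_u_sub_le Xx Zz).
Qed.

Lemma uconj_price_bounded : price_bounded (price_of (uconj phi)) (`|Mu| + C).
Proof.
have [x0 Xx0] := nX; have C0 : 0 <= C := le_trans (normr_ge0 _) (phiC Xx0).
case=> [z0||] /= Zz; rewrite ?normr0 ?addr_ge0 //.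
by apply: le_trans (norm_uconj_le Zz) _; rewrite lerD2r ler_norm.
Qed.

End UConjugate.

Lemma uconj_equicont e : 0 < e -> exists2 d, 0 < d & forall phi C,
  (forall x, X x -> `|phi x| <= C) ->
  forall z z', Z0 z -> Z0 z' -> ball z d z' -> `|uconj phi z - uconj phi z'| <= e.
Proof.
move=> e0; have [d d0 Hd] := u_equicont_z e0; exists d => // phi C phiC z z' Zz Zz' zz'.
apply: (dist_sup_image_le (g := fun x => u x z - phi x)
  (h := fun x => u x z' - phi x) nX (c := Mu + C)) => x Xx.
  exact: norm_u_sub_le.
by rewrite opprB addrA subrK; exact: Hd.
Qed.

Lemma Ifun_uconj_le p P : price_bounded p P -> p Zd = 0 -> p Zs = 0 ->
  Icost (price_of (uconj (psharp Z0 u p))) <= Icost p.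
Proof.
move=> pP pd ps; have phiC x := @norm_psharp_le p P pP x.
apply: (Ifun_le pP (uconj_price_bounded phiC)).
- move=> x Xx; apply: psharp_le => -[z0||] Zz /=.
  + by have := le_uconj phiC Xx Zz; lra.
  + by have := le_psharp pP Xx (I : Z Zd); rewrite /= pd.
  + by have := le_psharp pP Xx (I : Z Zs); rewrite /= ps.
- move=> y Yy; apply: le_pflat => -[z0||] Zz /=.
  + have : uconj (psharp Z0 u p) z0 <= p (ZR z0).
      by apply: uconj_le => x Xx; have := le_psharp pP Xx Zz; rewrite /=; lra.
    by have := pflat_le pP Yy Zz; rewrite /=; lra.
  + by have := pflat_le pP Yy (I : Z Zd); rewrite /= pd.
  + by have := pflat_le pP Yy (I : Z Zs); rewrite /= ps.
Qed.

Let Cphi := Bu + PB.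

(* Cphi bounds p^sharp for every truncated price system, see
   [exists_conj_family_le]. *)
Definition conj_family : set (V -> R) := [set f | exists2 phi,
  (forall x, X x -> `|phi x| <= Cphi) & f = truncate (uconj phi)].

Lemma exists_conj_family_le p : price_system Z0 p ->
  exists2 f, conj_family f & Icost (price_of f) <= Icost p.
Proof.
move=> pp; have [P pP] := price_system_bounded pp; case: pp => _ [pd ps].
pose p1 := price_of (truncate (fun z => p (ZR z))).
have p1B : price_bounded p1 PB := truncate_price_bounded _.
have phiC x : X x -> `|psharp Z0 u p1 x| <= Cphi := norm_psharp_le p1B (x := x).
exists (truncate (uconj (psharp Z0 u p1))); first by exists (psharp Z0 u p1).
apply: le_trans (Ifun_truncate_le (uconj_price_bounded phiC) erefl erefl) _.
apply: le_trans (Ifun_uconj_le p1B erefl erefl) _.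
exact: (Ifun_truncate_le pP pd ps).
Qed.

Lemma conj_family_price_bounded f : conj_family f -> price_bounded (price_of f) PB.
Proof. by move=> [phi _ ->]; apply: truncate_price_bounded. Qed.

Lemma conj_family_range f z : conj_family f -> Num.min (a0 z) (b0 z) <= f z <= b0 z.
Proof. by move=> [phi _ ->]; rewrite clamp_ge_min clamp_le. Qed.

Lemma conj_family_between f z : conj_family f -> a0 z <= b0 z -> a0 z <= f z <= b0 z.
Proof. by move=> [phi _ ->] ab; rewrite clamp_ge // clamp_le. Qed.

Lemma conj_family_equicont e : 0 < e -> exists2 d, 0 < d & forall f, conj_family f ->
  forall z z', Z0 z -> Z0 z' -> ball z d z' -> `|f z - f z'| <= e.
Proof.
move=> e0; have e3 : 0 < e / 3 by rewrite divr_gt0.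
have [r1 r1_0 H1] := uconj_equicont e3.
have [r2 r2_0 H2] := a0_unif_cont e3; have [r3 r3_0 H3] := b0_unif_cont e3.
exists (Num.min r1 (Num.min r2 r3)) => [|f [phi phiC ->] z z' Zz Zz' zz'].
  by rewrite !lt_min r1_0 r2_0 r3_0.
have zz (r : R) : Num.min r1 (Num.min r2 r3) <= r -> ball z r z'.
  by move=> hr; apply: (le_ball hr).
apply: le_trans (dist_clamp_le _ _ _ _ _ _) _.
have := H1 _ _ phiC _ _ Zz Zz' (zz _ _); rewrite ge_min lexx => /(_ isT).
have := H2 _ _ Zz Zz' (zz _ _); rewrite !ge_min lexx orbT => /(_ isT).
have := H3 _ _ Zz Zz' (zz _ _); rewrite !ge_min lexx !orbT => /(_ isT).
lra.
Qed.

Lemma conj_family_precompact :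
  precompact (conj_family : set {family compact, subspace Z0 -> R}).
Proof.
apply: (@pointwise_precompact_equicontinuous _ _ (@Rhausdorff R)).
- move=> z; apply: (@precompact_subset _ _ `[Num.min (a0 z) (b0 z), b0 z]%classic).
    by move=> _ [f Kf <-] /=; rewrite in_itv /= conj_family_range.
  by apply: compact_precompact; [exact: Rhausdorff | exact: segment_compact].
- move=> z E; rewrite -entourage_ballE => -[e /= e0 He].
  have [d d0 Hd] := conj_family_equicont (divr_gt0 e0 (ltr0Sn _ 1)).
  apply/nbhs_ballP; exists d => //= y.
  rewrite ball_subspace_ball /subspace_ball; case: ifP => /asboolP Zz; last first.
    by move=> -> f Kf; apply: He; exact: ballxx.
  move=> [Zy zy] f Kf; apply: He; rewrite /ball /=.
  by apply: le_lt_trans (Hd f Kf z y Zz Zy zy) _; lra.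
Qed.

Let m := inf [set Icost (price_of f) | f in conj_family].

Lemma conj_family_nonempty : conj_family !=set0.
Proof.
exists (truncate (uconj (fun _ => 0))); exists (fun _ => 0) => // x _.
by rewrite normr0 /Cphi /Bu /PB !addr_ge0.
Qed.

Lemma inf_conj_family_le f : conj_family f -> m <= Icost (price_of f).
Proof.
move=> Kf; apply: (inf_image_le (g := fun f => Icost (price_of f)) (c := 0)) => // h Kh.
exact: Ifun_ge0 (conj_family_price_bounded Kh) erefl erefl.
Qed.

Lemma conj_family_minimizing c : 0 < c ->
  exists2 f, conj_family f & Icost (price_of f) < m + c.
Proof.
move=> c0.
have [_ [f Kf <-]] : exists2 r, [set Icost (price_of f) | f in conj_family] r & r < m + c.
  by apply: inf_lt; [exact: image_nonempty conj_family_nonempty | rewrite ltrDl].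
by exists f.
Qed.

Definition minimizing_limit (g : V -> R) := forall e c, 0 < e -> 0 < c ->
  exists f, [/\ conj_family f, forall z, Z0 z -> `|g z - f z| < e &
                Icost (price_of f) < m + c].

Lemma exists_minimizing_limit : exists g, minimizing_limit g.
Proof.
have minseq n : exists f, conj_family f /\ Icost (price_of f) < m + n.+1%:R^-1.
  have n0 : 0 < n.+1%:R^-1 :> R by rewrite invr_gt0 ltr0Sn.
  have [f Kf If] := conj_family_minimizing n0.
  by exists f.
have [fs fsP] := choice minseq.
have pc := conj_family_precompact; rewrite precompactE in pc.
have FK : (fs @ \oo) (closure (conj_family : set {family compact, subspace Z0 -> R})).
  by exists 0%N => // n _; apply: subset_closure; exact: (fsP n).1.
have [g [_ clg]] := pc _ (fmap_proper_filter _ _) FK.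
exists g => e c e0 c0.
have [N HN] := ltr_add_invr c0; rewrite add0r in HN.
(* A cluster point [g] of [fs] meets every tail [A] in each uniform
   neighbourhood [B]. *)
pose A := [set f : {family compact, subspace Z0 -> R} | exists2 n, (N <= n)%N & f = fs n].
pose B := [set h : {family compact, subspace Z0 -> R} |
  forall z, Z0 z -> [set xy : R * R | ball xy.1 e xy.2] (g z, h z)].
have FA : (fs @ \oo) A by exists N => // n Nn; exists n.
have NB : nbhs g B.
  apply: fam_nbhs; first by rewrite -entourage_ballE; exists e.
  by have := (compact_subspaceIP Z0 Z0).2; rewrite setIid; apply.
have [_ [[n Nn ->] Bn]] := clg A B FA NB.
exists (fs n); split; first exact: (fsP n).1.
  by move=> z Zz; exact: Bn.
apply: lt_le_trans (fsP n).2 _; rewrite lerD2l; apply: le_trans (ltW HN).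
by rewrite lef_pV2 ?posrE ?ltr0Sn // ler_nat ltnS.
Qed.

Section MinimizingLimit.
Variable g : V -> R.
Hypothesis gK : minimizing_limit g.

Lemma minimizing_limit_approx e : 0 < e ->
  exists2 f, conj_family f & forall z, Z0 z -> `|g z - f z| < e.
Proof. by move=> e0; have [f [Kf gf _]] := gK e0 ltr01; exists f. Qed.

Lemma minimizing_limit_unif_cont : unif_cont_on Z0 g.
Proof.
move=> e e0; have e3 : 0 < e / 3 by rewrite divr_gt0.
have [d d0 Hd] := conj_family_equicont e3; have [f Kf gf] := minimizing_limit_approx e3.
exists d => // z z' Zz Zz' zz'.
have /ltr_normlP [? ?] := gf z Zz; have /ltr_normlP [? ?] := gf z' Zz'.
have := Hd f Kf z z' Zz Zz' zz'; rewrite !ler_norml => /andP [? ?].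
by apply/andP; split; lra.
Qed.

Lemma minimizing_limit_price_bounded : price_bounded (price_of g) (PB + 1).
Proof.
have [f Kf gf] := minimizing_limit_approx ltr01.
case=> [z0||] /= Zz; rewrite ?normr0 ?addr_ge0 //.
have /ltr_normlP [? ?] := gf z0 Zz.
have := conj_family_price_bounded Kf (z := ZR z0) Zz.
rewrite /= !ler_norml => /andP [? ?].
by apply/andP; split; lra.
Qed.

Lemma minimizing_limit_between z : Z0 z -> a0 z <= b0 z -> a0 z <= g z <= b0 z.
Proof.
move=> Zz ab; apply/andP; split; apply/ler_addgt0Pr => e e0;
  have [f Kf gf] := minimizing_limit_approx e0; have /ltr_normlP [? ?] := gf z Zz;
  have /andP [? ?] := conj_family_between Kf ab; lra.
Qed.

Lemma minimizing_limit_admissible : admissible (price_of g).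
Proof.
split; first by split => //; exact: unif_cont_within minimizing_limit_unif_cont.
by move=> z /Z1set_ZR [z0 -> [Zz ab]]; exact: minimizing_limit_between.
Qed.

Lemma minimizing_limit_Ifun_le : Icost (price_of g) <= m.
Proof.
apply/ler_addgt0Pr => c c0; pose e := c / (2 * (KI + 1)).
have KI1 : 0 < KI + 1 by have := KI_ge0; lra.
have e0 : 0 < e by rewrite divr_gt0 // mulr_gt0.
have [f [Kf gf If]] := gK e0 (divr_gt0 c0 (ltr0Sn _ 1)).
have fB := conj_family_price_bounded Kf.
have gf' z : Z z -> `|price_of g z - price_of f z| <= e.
  by case: z => [z0||] /= Zz; rewrite ?subrr ?normr0 ltW ?gf.
have eK : e * KI <= c / 2.
  rewrite (_ : c / 2 = e * (KI + 1)); last by rewrite /e; field; exact: lt0r_neq0.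
  by apply: ler_wpM2l; [exact: ltW | lra].
have sharp x : X x -> psharp Z0 u (price_of g) x <= psharp Z0 u (price_of f) x + e.
  by move=> Xx; have /ler_normlP [_ ?] := dist_psharp_le fB Xx gf'; lra.
have flat y : Y y -> pflat Z0 v (price_of f) y <= pflat Z0 v (price_of g) y + e.
  by move=> Yy; have /ler_normlP [? _] := dist_pflat_le fB Yy gf'; lra.
have := Ifun_le_shift fB minimizing_limit_price_bounded sharp flat.
lra.
Qed.

End MinimizingLimit.

Lemma Ifun_min_exists : exists pbar, admissible pbar /\
  forall p, admissible p -> Icost pbar <= Icost p.
Proof.
have [g gK] := exists_minimizing_limit.
exists (price_of g); split; first exact: minimizing_limit_admissible.
move=> p [pp _]; have [f Kf fp] := exists_conj_family_le pp.
exact: le_trans (minimizing_limit_Ifun_le gK) (le_trans (inf_conj_family_le Kf) fp).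
Qed.

Lemma Ifun_convex_admissible p q t : admissible p -> admissible q -> 0 <= t <= 1 ->
  Icost (fun z => t * p z + (1 - t) * q z) <= t * Icost p + (1 - t) * Icost q.
Proof.
move=> [pp _] [qq _]; have [P pP] := price_system_bounded pp.
have [Q qQ] := price_system_bounded qq.
exact: Ifun_convex pP qQ.
Qed.

End PriceSystems.

Unset Implicit Arguments.

Theorem mainTheorem12 (R : realType) (d1 d2 d3 : nat)
  (X : set 'rV[R]_d1) (Y : set 'rV[R]_d2) (Z0 : set 'rV[R]_d3)
  (mu : {finite_measure set (borelRV R d1) -> \bar R})
  (nu : {finite_measure set (borelRV R d2) -> \bar R})
  (u : 'rV[R]_d1 -> 'rV[R]_d3 -> R) (v : 'rV[R]_d2 -> 'rV[R]_d3 -> R) :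
  compact X -> compact Y -> compact Z0 ->
  X !=set0 -> Y !=set0 ->
  regular_first X Z0 u -> regular_first Y Z0 v ->
  Z1set X Y Z0 u v !=set0 ->
  (forall (p q : Zpt 'rV[R]_d3 -> R) (t : R),
      admissible X Y Z0 u v p -> admissible X Y Z0 u v q -> 0 <= t <= 1 ->
      admissible X Y Z0 u v (fun z => t * p z + (1 - t) * q z) /\
      Ifun mu nu X Y Z0 u v (fun z => t * p z + (1 - t) * q z)
        <= t * Ifun mu nu X Y Z0 u v p + (1 - t) * Ifun mu nu X Y Z0 u v q) /\
  (exists pbar : Zpt 'rV[R]_d3 -> R,
      admissible X Y Z0 u v pbar /\
      forall p, admissible X Y Z0 u v p ->
        Ifun mu nu X Y Z0 u v pbar <= Ifun mu nu X Y Z0 u v p).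
Proof.
move=> cX cY cZ nX nY [U [_ XZU cU _ _]] [U' [_ YZU' cV _ _]] _.
have ucu : unif_cont_on (X `*` Z0) (fun q => u q.1 q.2).
  by apply: compact_unif_cont (compact_setX cX cZ) _ => q /XZU /cU.
have ucv : unif_cont_on (Y `*` Z0) (fun q => v q.1 q.2).
  by apply: compact_unif_cont (compact_setX cY cZ) _ => q /YZU' /cV.
have [Mu HMu] := compact_within_continuous_bounded (compact_setX cX cZ)
  (unif_cont_within ucu).
have [Mv HMv] := compact_within_continuous_bounded (compact_setX cY cZ)
  (unif_cont_within ucv).
have {}HMu x z : X x -> Z0 z -> `|u x z| <= Mu by move=> Xx Zz; exact: (HMu (x, z)).
have {}HMv y z : Y y -> Z0 z -> `|v y z| <= Mv by move=> Yy Zz; exact: (HMv (y, z)).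
split; last exact: (Ifun_min_exists cX cY cZ nX nY ucu ucv HMu HMv).
move=> p q t pA qA t01; split; first exact: admissible_convex.
exact: (Ifun_convex_admissible cX cY cZ ucu ucv HMu HMv).
Qed.
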